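(* The $\mathbb F$-algebra $\Re$ has a presentation with generators $A,B,\alpha,\beta,\delta$ and relations $A^2B-2ABA+BA^2-2AB-2BA=2A^2-2A\delta+2\alpha$, $AB^2-2BAB+B^2A-2AB-2BA=2B^2-2B\delta-2\beta$, and $\alpha,\beta,\delta$ commute with $A$ and with $B$, and $\alpha\delta=\delta\alpha$, $\beta\delta=\delta\beta$.
   Context: $\mathbb F$ is an algebraically closed field. The Racah algebra $\Re$ is the unital associative $\mathbb F$-algebra with generators $A,B,C,D$ and relations $[A,B]=[B,C]=[C,A]=2D$ together with the requirement that each of $\alpha:=[A,D]+AC-BA$, $\beta:=[B,D]+BA-CB$, $\gamma:=[C,D]+CB-AC$ is central in $\Re$; $\delta:=A+B+C$. Here $[X,Y]=XY-YX$. *)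

From HB Require Import structures.
From mathcomp Require Import all_boot all_order all_algebra.
Set Implicit Arguments. Unset Strict Implicit. Unset Printing Implicit Defensive.
Import GRing.Theory.
Local Open Scope ring_scope.

Section Racah.
Variables (F : fieldType) (R : algType F).

Definition comm_br (X Y : R) : R := X * Y - Y * X.

Definition ralpha (A B C D : R) : R := comm_br A D + A * C - B * A.
Definition rbeta  (A B C D : R) : R := comm_br B D + B * A - C * B.
Definition rgamma (A B C D : R) : R := comm_br C D + C * B - A * C.

(* defining relations of the Racah algebra Re on generators A,B,C,D,
   interpreted in an F-algebra R: "x is central in Re" becomes
   "x commutes with each of the generators A,B,C,D". *)
Definition commutes_gens (x A B C D : R) : Prop :=
  [/\ x * A = A * x, x * B = B * x, x * C = C * x & x * D = D * x].

Definition racah_rel (A B C D : R) : Prop :=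
  [/\ [/\ comm_br A B = D *+ 2, comm_br B C = D *+ 2 & comm_br C A = D *+ 2],
      commutes_gens (ralpha A B C D) A B C D,
      commutes_gens (rbeta A B C D) A B C D &
      commutes_gens (rgamma A B C D) A B C D].

Definition pres_rel (A B a b d : R) : Prop :=
  [/\ A ^+ 2 * B - (A * B * A) *+ 2 + B * A ^+ 2 - (A * B) *+ 2 - (B * A) *+ 2
        = (A ^+ 2) *+ 2 - (A * d) *+ 2 + a *+ 2,
      A * B ^+ 2 - (B * A * B) *+ 2 + B ^+ 2 * A - (A * B) *+ 2 - (B * A) *+ 2
        = (B ^+ 2) *+ 2 - (B * d) *+ 2 - b *+ 2,
      [/\ a * A = A * a, a * B = B * a, b * A = A * b & b * B = B * b],
      (d * A = A * d /\ d * B = B * d) &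
      (a * d = d * a /\ b * d = d * b)].
End Racah.

From HB Require Import structures.
From mathcomp Require Import all_boot all_order all_algebra.
From Stdlib Require Ncring Ncring_tac.
Set Implicit Arguments.
Unset Strict Implicit.
Unset Printing Implicit Defensive.
Import GRing.Theory.
Local Open Scope ring_scope.

(* Put delta = A + B + C.  The relations [A,B] = [B,C] = [C,A] = 2D make delta
   commute with A and B, and determine D = [A,B]/2 and C = delta - A - B from
   A, B, delta.  Rewriting alpha and beta with C = delta - A - B turns them
   into the two cubic relations, up to [A,[A,B] - 2D] and [B,[A,B] - 2D],
   which vanish.  Conversely, given the new relations, alpha, beta and
   gamma = [delta,D] - alpha - beta = -(alpha + beta) are central. *)

Section RacahIdentities.
Variables (F : fieldType) (R : algType F).

#[local] Instance alg_ring_ops : @Ncring.Ring_ops R 0 1 +%R *%R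
  (fun x y => x - y) -%R (@eq R) := {}.

#[local] Instance alg_ring : Ncring.Ring (Ro := alg_ring_ops).
Proof.
split.
- exact: RelationClasses.eq_equivalence.
- by move=> ? ? -> ? ? ->.
- by move=> ? ? -> ? ? ->.
- by move=> ? ? -> ? ? ->.
- by move=> ? ? ->.
- exact: add0r. - exact: addrC. - exact: addrA. - exact: mul1r. - exact: mulr1.
- exact: mulrA. - exact: mulrDl. - by move=> x y z; apply: mulrDr.
- by []. - exact: subrr.
Qed.

Ltac nc_ring := rewrite /ralpha /rbeta /rgamma /comm_br ?mulr2n ?expr2;
  Ncring_tac.non_commutative_ring.

Lemma comm_brr0 (x : R) : comm_br x 0 = 0.
Proof. by rewrite /comm_br mulr0 mul0r subrr. Qed.

Lemma comm_br_eq0 (x y : R) : GRing.comm x y -> comm_br x y = 0.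
Proof. by rewrite /comm_br => ->; rewrite subrr. Qed.

Lemma commr_comm_br (x y z : R) :
  GRing.comm x y -> GRing.comm x z -> GRing.comm x (comm_br y z).
Proof. by move=> xy xz; apply: commrB; apply: commrM. Qed.

Lemma commrZ (x y : R) (k : F) : GRing.comm x y -> GRing.comm x (k *: y).
Proof. by rewrite /GRing.comm -scalerAr -scalerAl => ->. Qed.

Lemma commNDl (x y z : R) :
  GRing.comm x z -> GRing.comm y z -> GRing.comm (- (x + y)) z.
Proof.
by move=> /commr_sym xz /commr_sym yz; apply/commr_sym/commrN/commrD.
Qed.

Lemma commr_cyclic_sum (A B C X : R) :
  comm_br A B = X -> comm_br C A = X -> GRing.comm A (A + B + C).
Proof.
move=> hAB hCA; apply/eqP; rewrite -subr_eq0; apply/eqP.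
have -> : A * (A + B + C) - (A + B + C) * A = comm_br A B - comm_br C A by nc_ring.
by rewrite hAB hCA subrr.
Qed.

Lemma comm_br_central_compl (A B d : R) :
  GRing.comm d A -> GRing.comm d B ->
  comm_br B (d - (A + B)) = comm_br A B /\ comm_br (d - (A + B)) A = comm_br A B.
Proof.
move=> dA dB; split.
- have -> : comm_br B (d - (A + B)) = comm_br A B - comm_br d B by nc_ring.
  by rewrite (comm_br_eq0 dB) subr0.
- have -> : comm_br (d - (A + B)) A = comm_br A B + comm_br d A by nc_ring.
  by rewrite (comm_br_eq0 dA) addr0.
Qed.

Lemma ralpha_rbeta_rgamma_sum (A B C D : R) :
  ralpha A B C D + rbeta A B C D + rgamma A B C D = comm_br (A + B + C) D.
Proof. nc_ring. Qed.

Lemma pres_rel1_defect (A B C D : R) :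
  A ^+ 2 * B - (A * B * A) *+ 2 + B * A ^+ 2 - (A * B) *+ 2 - (B * A) *+ 2
  - ((A ^+ 2) *+ 2 - (A * (A + B + C)) *+ 2 + ralpha A B C D *+ 2)
  = comm_br A (comm_br A B - D *+ 2).
Proof. nc_ring. Qed.

Lemma pres_rel2_defect (A B C D : R) :
  A * B ^+ 2 - (B * A * B) *+ 2 + B ^+ 2 * A - (A * B) *+ 2 - (B * A) *+ 2
  - ((B ^+ 2) *+ 2 - (B * (A + B + C)) *+ 2 - rbeta A B C D *+ 2)
  = comm_br B (D *+ 2 - comm_br A B) + comm_br B (A + B + C) *+ 2.
Proof. nc_ring. Qed.

Lemma pres_rel1_ralpha (A B C D : R) : comm_br A B = D *+ 2 ->
  A ^+ 2 * B - (A * B * A) *+ 2 + B * A ^+ 2 - (A * B) *+ 2 - (B * A) *+ 2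
  = (A ^+ 2) *+ 2 - (A * (A + B + C)) *+ 2 + ralpha A B C D *+ 2.
Proof.
move=> hD; apply/eqP; rewrite -subr_eq0; apply/eqP.
by rewrite pres_rel1_defect hD subrr comm_brr0.
Qed.

Lemma pres_rel2_rbeta (A B C D : R) :
  comm_br A B = D *+ 2 -> GRing.comm B (A + B + C) ->
  A * B ^+ 2 - (B * A * B) *+ 2 + B ^+ 2 * A - (A * B) *+ 2 - (B * A) *+ 2
  = (B ^+ 2) *+ 2 - (B * (A + B + C)) *+ 2 - rbeta A B C D *+ 2.
Proof.
move=> hD /comm_br_eq0 hB; apply/eqP; rewrite -subr_eq0; apply/eqP.
by rewrite pres_rel2_defect hD subrr comm_brr0 hB mul0rn addr0.
Qed.

Lemma commutes_gens_compl (x A B d : R) (k : F) :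
  GRing.comm x A -> GRing.comm x B -> GRing.comm x d ->
  commutes_gens x A B (d - (A + B)) (k *: comm_br A B).
Proof.
move=> xA xB xd; split=> //.
- exact/commrB/commrD.
- exact/commrZ/commr_comm_br.
Qed.

Hypothesis two_neq0 : (2 : F) != 0.

Lemma mulr2n_inj : injective (fun x : R => x *+ 2).
Proof. by move=> x y /= /eqP; rewrite -!scaler_nat => /eqP /(scalerI two_neq0). Qed.

Lemma mulr2n_halfZ (x : R) : ((2 : F)^-1 *: x) *+ 2 = x.
Proof. by rewrite -scaler_nat scalerA mulfV // scale1r. Qed.

Lemma pres_rel_of_racah (A B C D : R) : racah_rel A B C D ->
  pres_rel A B (ralpha A B C D) (rbeta A B C D) (A + B + C).
Proof.
case=> [[hAB hBC hCA] [aA aB aC _] [bA bB bC _] _].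
have dA : GRing.comm (A + B + C) A := commr_sym (commr_cyclic_sum hAB hCA).
have dB : GRing.comm (A + B + C) B.
  by apply: commr_sym; rewrite -addrA addrC; apply: commr_cyclic_sum hBC hAB.
split.
- exact: pres_rel1_ralpha.
- exact/pres_rel2_rbeta/commr_sym.
- by [].
- by [].
- by split; apply: commrD => //; apply: commrD.
Qed.

Lemma racah_rel_inj (A B C D C' D' : R) :
  racah_rel A B C D -> racah_rel A B C' D' ->
  A + B + C = A + B + C' -> C = C' /\ D = D'.
Proof.
case=> [[hAB _ _] _ _ _] [[hAB' _ _] _ _ _] /addrI eC.
by split=> //; apply: mulr2n_inj; rewrite /= -hAB -hAB'.
Qed.

Lemma racah_of_pres_rel (A B a b d : R) : pres_rel A B a b d ->
  exists C D : R, [/\ racah_rel A B C D, ralpha A B C D = a,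
                      rbeta A B C D = b & A + B + C = d].
Proof.
case=> r1 r2 [aA aB bA bB] [dA dB] [ad bd].
pose D := (2 : F)^-1 *: comm_br A B; pose C := d - (A + B).
have hD : comm_br A B = D *+ 2 by rewrite mulr2n_halfZ.
have hd : A + B + C = d by rewrite addrC subrK.
have Ea : ralpha A B C D = a.
  by have := pres_rel1_ralpha C hD; rewrite hd r1 => /addrI /mulr2n_inj.
have Eb : rbeta A B C D = b.
  have := @pres_rel2_rbeta A B C D hD.
  by rewrite hd r2 => /(_ (commr_sym dB)) /addrI /oppr_inj /mulr2n_inj.
have Eg : rgamma A B C D = - (a + b).
  have dD : GRing.comm d D := commrZ _ (commr_comm_br dA dB).
  have := ralpha_rbeta_rgamma_sum A B C D.
  by rewrite hd Ea Eb comm_br_eq0 // => /eqP; rewrite addrC addr_eq0 => /eqP.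
have [hBC hCA] := comm_br_central_compl dA dB.
exists C, D; split => //; split.
- by split; rewrite -?hD.
- by rewrite Ea; apply: commutes_gens_compl.
- by rewrite Eb; apply: commutes_gens_compl.
- by rewrite Eg; apply: commutes_gens_compl; apply: commNDl.
Qed.

End RacahIdentities.

Theorem lemma2p3 (F : closedFieldType) (h2 : (2 : F) != 0) (R : algType F) :
  (forall A B C D : R, racah_rel A B C D ->
     pres_rel A B (ralpha A B C D) (rbeta A B C D) (A + B + C)) /\
  (forall A B C D C' D' : R, racah_rel A B C D -> racah_rel A B C' D' ->
     ralpha A B C D = ralpha A B C' D' -> rbeta A B C D = rbeta A B C' D' ->
     A + B + C = A + B + C' -> C = C' /\ D = D') /\
  (forall A B a b d : R, pres_rel A B a b d ->
     exists C D : R, [/\ racah_rel A B C D, ralpha A B C D = a,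
                         rbeta A B C D = b & A + B + C = d]).
Proof.
split; first exact: pres_rel_of_racah.
split; last exact: racah_of_pres_rel.
by move=> A B C D C' D' rel rel' _ _; apply: racah_rel_inj.
Qed.
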